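(* Consider TD-SVRG (Algorithm 1, as defined in the context) run on a dataset with any step size $\alpha>0$ and any inner-loop length $M\ge 1$. Then for every epoch $m\ge 1$, $$2\alpha M\,\mathbb E[f_d(\tilde\theta_m)]-2M\alpha^2\,\mathbb E[w(\tilde\theta_m)]\le \mathbb E\big[\|\tilde\theta_{m-1}-\theta^*\|^2\big]+2\alpha^2M\,\mathbb E[w(\tilde\theta_{m-1})],$$ where the expectations are over all randomness of the algorithm (all previous epochs and the samples drawn in epoch $m$).
   Context: Finite-sample setting. Let $\mathcal S$ be a finite state space, $\phi:\mathcal S\to\mathbb R^d$ a feature map with $\|\phi(s)\|_2\le 1$ for all $s$, $r:\mathcal S\times\mathcal S\to\mathbb R$ a reward function and $\gamma\in[0,1)$. For a pair of states $(s,s')$ and $\theta\in\mathbb R^d$ let $g_{s,s'}(\theta)=(r(s,s')+\gamma\phi(s')^T\theta-\phi(s)^T\theta)\phi(s)$. A dataset is a state trajectory $s_1,\dots,s_{N+1}$, giving the $N$ pairs $(s_t,s_{t+1})$, $t=1,\dots,N$. Let $A_d=\frac1N\sum_{t=1}^N\phi(s_t)(\phi(s_t)-\gamma\phi(s_{t+1}))^T$ and $b_d=\frac1N\sum_{t=1}^N r(s_t,s_{t+1})\phi(s_t)$, so that $\bar g(\theta):=\frac1N\sum_{t=1}^N g_{s_t,s_{t+1}}(\theta)=-A_d\theta+b_d$. Assume $A_d$ is nonsingular and let $\theta^*=A_d^{-1}b_d$. Define $f_d(\theta)=(\theta-\theta^* )^TA_d(\theta-\theta^* )$ and $w(\theta)=\frac1N\sum_{t=1}^N\|g_{s_t,s_{t+1}}(\theta)-g_{s_t,s_{t+1}}(\theta^*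 )\|^2$. Algorithm 1 (TD-SVRG): given $\alpha>0$, an integer $M\ge1$ and an initial $\tilde\theta_0\in\mathbb R^d$, for epochs $m=1,2,\dots$: set $\tilde\theta=\tilde\theta_{m-1}$, compute $\bar g(\tilde\theta)$, set $\theta_0=\tilde\theta$; for $t=1,\dots,M$ draw an index $i_t$ uniformly from $\{1,\dots,N\}$, independently of everything else, put $(s,s')=(s_{i_t},s_{i_t+1})$, $v_t=g_{s,s'}(\theta_{t-1})-g_{s,s'}(\tilde\theta)+\bar g(\tilde\theta)$ and $\theta_t=\theta_{t-1}+\alpha v_t$; finally set $\tilde\theta_m=\theta_{t'}$ where $t'$ is drawn uniformly from $\{0,\dots,M-1\}$ independently of everything else. *)

From HB Require Import structures.
From mathcomp Require Import all_boot all_order all_algebra.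
Set Implicit Arguments. Unset Strict Implicit. Unset Printing Implicit Defensive.
Import Order.TTheory GRing.Theory Num.Theory.
Local Open Scope ring_scope.

Definition dotv {R : realFieldType} {d : nat} (u v : 'cV[R]_d) : R := (u^T *m v) 0 0.
Definition sqnorm {R : realFieldType} {d : nat} (u : 'cV[R]_d) : R := dotv u u.

Section TDSVRG.
Variables (R : realFieldType) (S : finType) (d : nat)
  (phi : S -> 'cV[R]_d) (r : S -> S -> R) (gamma : R).

Definition gTD (s s' : S) (th : 'cV[R]_d) : 'cV[R]_d :=
  (r s s' + gamma * dotv (phi s') th - dotv (phi s) th) *: phi s.

(* dataset: trajectory traj 0, ..., traj N (0-indexed), pairs (traj t, traj t.+1), t < N *)
Variables (N : nat) (traj : nat -> S).

Definition gbar (th : 'cV[R]_d) : 'cV[R]_d :=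
  N%:R^-1 *: \sum_(t < N) gTD (traj t) (traj t.+1) th.

Definition A_d : 'M[R]_d :=
  N%:R^-1 *: \sum_(t < N) (phi (traj t) *m (phi (traj t) - gamma *: phi (traj t.+1))^T).

Definition b_d : 'cV[R]_d :=
  N%:R^-1 *: \sum_(t < N) (r (traj t) (traj t.+1) *: phi (traj t)).

Definition theta_star : 'cV[R]_d := invmx A_d *m b_d.

Definition f_d (th : 'cV[R]_d) : R :=
  ((th - theta_star)^T *m A_d *m (th - theta_star)) 0 0.

Definition w_d (th : 'cV[R]_d) : R :=
  N%:R^-1 * \sum_(t < N)
     sqnorm (gTD (traj t) (traj t.+1) th - gTD (traj t) (traj t.+1) theta_star).

Variables (alpha : R) (M : nat).

(* randomness of one epoch: the indices i_1..i_M (i_t = o.1 (t-1), pair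
   (traj i, traj i.+1)) and the output index t' = o.2 in {0..M-1} *)
Notation Omega := ({ffun 'I_M -> 'I_N} * 'I_M)%type.

Definition inner_step (tt th : 'cV[R]_d) (i : nat) : 'cV[R]_d :=
  th + alpha *: (gTD (traj i) (traj i.+1) th - gTD (traj i) (traj i.+1) tt + gbar tt).

Definition epoch (tt : 'cV[R]_d) (o : Omega) : 'cV[R]_d :=
  foldl (inner_step tt) tt (take o.2 [seq val (o.1 j) | j <- enum 'I_M]).

Variable theta0 : 'cV[R]_d.

(* ttilde_k as a function of the randomness om = (o_1, o_2, ...) of the epochs *)
Definition theta_tilde (k : nat) (om : seq Omega) : 'cV[R]_d :=
  foldl epoch theta0 (take k om).

Definition Exp (m : nat) (X : seq Omega -> R) : R :=
  (#|{: m.-tuple Omega}|%:R)^-1 * \sum_(om : m.-tuple Omega) X (tval om).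

End TDSVRG.

From HB Require Import structures.
From mathcomp Require Import all_boot all_order all_algebra.
From mathcomp Require Import ring lra.
Set Implicit Arguments. Unset Strict Implicit. Unset Printing Implicit Defensive.
Import Order.TTheory GRing.Theory Num.Theory.
Local Open Scope ring_scope.

(** Fix an epoch started at [tt], an inner iterate [th], and write
[e = th - theta_star].  The update direction for sample [k] is
[v_k = a_k - (b_k - gbar tt)] with [a_k = g_k th - g_k theta_star] and
[b_k = g_k tt - g_k theta_star].  Its mean is [gbar th = - A_d e], so the cross
term of [|e + alpha v_k|^2] averages to [-2 alpha f_d th].  Since
[gbar theta_star = 0], the mean of [b_k] is [gbar tt], so [b_k - gbar tt] is
centred and its second moment is at most that of [b_k], namely [w_d tt]; hence
[|v_k|^2] averages to at most [2 w_d th + 2 w_d tt].  Summing this one-step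
bound over the [M] inner steps telescopes, and since the epoch outputs
[theta_t'] for a uniform [t'], [M] times the average over the output is that
sum.  The bound for one epoch holds for every outcome of the previous epochs,
so it survives averaging over them. *)

Section InnerProduct.
Variables (R : realFieldType) (d : nat).
Implicit Types (u v w : 'cV[R]_d).

Lemma dotvE u v : dotv u v = \sum_i u i 0 * v i 0.
Proof. by rewrite /dotv mxE; apply: eq_bigr => i _; rewrite mxE. Qed.

Lemma dotvC u v : dotv u v = dotv v u.
Proof. by rewrite !dotvE; apply: eq_bigr => i _; rewrite mulrC. Qed.

Lemma dotvDr u v w : dotv u (v + w) = dotv u v + dotv u w.
Proof. by rewrite !dotvE -big_split; apply: eq_bigr => i _; rewrite mxE mulrDr. Qed.

Lemma dotvZr a u v : dotv u (a *: v) = a * dotv u v.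
Proof. by rewrite !dotvE mulr_sumr; apply: eq_bigr => i _; rewrite mxE mulrCA. Qed.

Lemma dotvNr u v : dotv u (- v) = - dotv u v.
Proof. by rewrite -scaleN1r dotvZr mulN1r. Qed.

Lemma dotvBr u v w : dotv u (v - w) = dotv u v - dotv u w.
Proof. by rewrite dotvDr dotvNr. Qed.

Lemma dotvDl u v w : dotv (v + w) u = dotv v u + dotv w u.
Proof. by rewrite dotvC dotvDr !(dotvC u). Qed.

Lemma dotvZl a u v : dotv (a *: v) u = a * dotv v u.
Proof. by rewrite dotvC dotvZr dotvC. Qed.

Lemma dotvBl u v w : dotv (v - w) u = dotv v u - dotv w u.
Proof. by rewrite dotvC dotvBr !(dotvC u). Qed.

Lemma dotv_sumr (I : finType) (F : I -> 'cV[R]_d) u :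
  dotv u (\sum_i F i) = \sum_i dotv u (F i).
Proof.
elim/big_rec2: _ => [|i y1 y2 _ <-]; last by rewrite dotvDr.
by rewrite dotvE big1 // => i _; rewrite mxE mulr0.
Qed.

Lemma sqnorm_ge0 u : 0 <= sqnorm u.
Proof. by rewrite /sqnorm dotvE; apply: sumr_ge0 => i _; rewrite -expr2 sqr_ge0. Qed.

Lemma sqnormD u v : sqnorm (u + v) = sqnorm u + 2 * dotv u v + sqnorm v.
Proof. rewrite /sqnorm !dotvDl !dotvDr (dotvC v u); ring. Qed.

Lemma sqnormB u v : sqnorm (u - v) = sqnorm u - 2 * dotv u v + sqnorm v.
Proof. rewrite /sqnorm !dotvBl !dotvBr (dotvC v u); ring. Qed.

Lemma sqnormZ a u : sqnorm (a *: u) = a ^+ 2 * sqnorm u.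
Proof. rewrite /sqnorm dotvZl dotvZr; ring. Qed.

Lemma sqnormB_le u v : sqnorm (u - v) <= 2 * sqnorm u + 2 * sqnorm v.
Proof. have := sqnorm_ge0 (u + v); rewrite sqnormD sqnormB; lra. Qed.

End InnerProduct.

Section Average.
Variable R : numFieldType.

Definition avg (T : finType) (F : T -> R) : R := #|T|%:R^-1 * \sum_x F x.

Lemma eq_avg (T : finType) (F G : T -> R) : F =1 G -> avg F = avg G.
Proof. by move=> FG; rewrite /avg (eq_bigr G). Qed.

Lemma avgD (T : finType) (F G : T -> R) :
  avg (fun x => F x + G x) = avg F + avg G.
Proof. by rewrite /avg big_split mulrDr. Qed.

Lemma avgB (T : finType) (F G : T -> R) :
  avg (fun x => F x - G x) = avg F - avg G.
Proof. by rewrite /avg sumrB mulrBr. Qed.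

Lemma avgZ (T : finType) c (F : T -> R) : avg (fun x => c * F x) = c * avg F.
Proof. by rewrite /avg -mulr_sumr mulrCA. Qed.

Lemma avg_cst (T : finType) c : (0 < #|T|)%N -> avg (fun _ : T => c) = c.
Proof.
move=> T0; rewrite /avg sumr_const -[c *+ _]mulr_natl mulrA mulVf ?mul1r //.
by rewrite pnatr_eq0 -lt0n.
Qed.

Lemma ler_avg (T : finType) (F G : T -> R) :
  (forall x, F x <= G x) -> avg F <= avg G.
Proof. by move=> FG; rewrite ler_wpM2l ?invr_ge0 // ler_sum. Qed.

Lemma avg_ge0 (T : finType) (F : T -> R) : (forall x, 0 <= F x) -> 0 <= avg F.
Proof. by move=> F0; rewrite mulr_ge0 ?invr_ge0 ?sumr_ge0. Qed.

Lemma avg_bij (T T' : finType) (h : T -> T') (F : T' -> R) :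
  bijective h -> avg (fun x => F (h x)) = avg F.
Proof.
by move=> hbij; rewrite /avg (bij_eq_card hbij) (reindex h) //; apply: onW_bij.
Qed.

Lemma avg_pair (T1 T2 : finType) (F : T1 * T2 -> R) :
  avg F = avg (fun x => avg (fun y => F (x, y))).
Proof.
rewrite /avg card_prod natrM invfM -mulrA; congr (_ * _).
by rewrite -mulr_sumr pair_big; congr (_ * _); apply: eq_bigr => -[].
Qed.

Lemma exchange_avg (T1 T2 : finType) (F : T1 -> T2 -> R) :
  avg (fun x => avg (fun y => F x y)) = avg (fun y => avg (fun x => F x y)).
Proof. by rewrite /avg -!mulr_sumr mulrCA exchange_big. Qed.

Lemma avg_tuple_rcons (T : finType) n (F : seq T -> R) :
  avg (fun s : n.+1.-tuple T => F s) =
  avg (fun p : n.-tuple T => avg (fun x => F (rcons p x))).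
Proof.
pose h (px : n.-tuple T * T) : n.+1.-tuple T := [tuple of rcons px.1 px.2].
have hbij : bijective h.
  apply: inj_card_bij; last by rewrite card_prod !card_tuple expnSr.
  by move=> [p x] [q y] /(congr1 val)/rcons_inj[/val_inj-> ->].
by rewrite -(avg_bij (fun s : n.+1.-tuple T => F s) hbij) avg_pair.
Qed.

Lemma avg_tuple_take (T : finType) n j (F : seq T -> R) :
  (0 < #|T|)%N -> (j <= n)%N ->
  avg (fun s : n.-tuple T => F (take j s)) = avg (fun s : j.-tuple T => F s).
Proof.
move=> T0; elim: n => [|n IHn].
  by rewrite leqn0 => /eqP->; apply: eq_avg => s; rewrite take0 tuple0.
rewrite leq_eqVlt => /predU1P[->|lt_jn].
  by apply: eq_avg => s; rewrite take_oversize ?size_tuple.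
rewrite (avg_tuple_rcons _ (fun s => F (take j s))) -IHn //; apply: eq_avg => p.
rewrite (@eq_avg _ _ (fun=> F (take j p))) ?avg_cst // => x.
by rewrite -cats1 takel_cat ?size_tuple.
Qed.

End Average.

Section Mean.
Variables (R : realFieldType) (d : nat) (I : finType).
Implicit Types (u : 'cV[R]_d) (v w : I -> 'cV[R]_d).

Definition mean v : 'cV[R]_d := #|I|%:R^-1 *: \sum_i v i.

Lemma meanB v w : mean (fun i => v i - w i) = mean v - mean w.
Proof. by rewrite /mean sumrB scalerBr. Qed.

Lemma mean_cst u : (0 < #|I|)%N -> mean (fun=> u) = u.
Proof.
move=> I0; rewrite /mean sumr_const -scaler_nat scalerA mulVf ?scale1r //.
by rewrite pnatr_eq0 -lt0n.
Qed.

Lemma avg_dotvr u v : avg (fun i => dotv u (v i)) = dotv u (mean v).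
Proof. by rewrite /mean dotvZr dotv_sumr. Qed.

Lemma avg_sqnorm_sub_mean v :
  avg (fun i => sqnorm (v i - mean v)) <= avg (fun i => sqnorm (v i)).
Proof.
case: (posnP #|I|) => [I0|I0]; first by rewrite /avg I0 invr0 !mul0r.
under eq_avg => i do rewrite sqnormB dotvC.
rewrite avgD avgB avgZ avg_dotvr avg_cst //.
have := sqnorm_ge0 (mean v); rewrite /sqnorm; lra.
Qed.

End Mean.

Lemma mulmx_1x1 (R : comPzRingType) p (X : 'M[R]_(p, 1)) (c : 'M[R]_1) :
  X *m c = c 0 0 *: X.
Proof. by apply/matrixP => i j; rewrite !mxE big_ord1 (ord1 j) mulrC. Qed.

Section TDStep.
Variables (R : realFieldType) (S : finType) (d : nat)
  (phi : S -> 'cV[R]_d) (r : S -> S -> R) (gamma : R) (N : nat) (traj : nat -> S).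
Hypothesis N_gt0 : (0 < N)%N.
Hypothesis A_unit : A_d phi gamma N traj \in unitmx.

Local Notation G k := (gTD phi r gamma (traj k) (traj k.+1)).
Local Notation A := (A_d phi gamma N traj).
Local Notation ts := (theta_star phi r gamma N traj).
Local Notation gb := (gbar phi r gamma N traj).
Local Notation fd := (f_d phi r gamma N traj).
Local Notation wd := (w_d phi r gamma N traj).

Lemma gTD_affine s s' th :
  gTD phi r gamma s s' th =
  r s s' *: phi s - (phi s *m (phi s - gamma *: phi s')^T) *m th.
Proof.
rewrite -mulmxA mulmx_1x1 -/(dotv _ _) dotvBl dotvZl /gTD -scalerBl.
by congr (_ *: _); ring.
Qed.

Lemma gbar_mean th : gb th = mean (fun k : 'I_N => G k th).
Proof. by rewrite /mean card_ord. Qed.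

Lemma gbarE th : gb th = A *m (ts - th).
Proof.
have A_ts : A *m ts = b_d phi r N traj by rewrite mulmxA mulmxV // mul1mx.
rewrite mulmxBr A_ts /gbar /b_d /A_d -scalemxAl mulmx_suml -scalerBr -sumrB.
by congr (_ *: _); apply: eq_bigr => k _; rewrite gTD_affine.
Qed.

Lemma gbar_theta_star : gb ts = 0.
Proof. by rewrite gbarE subrr mulmx0. Qed.

Lemma dotv_gbar th : dotv (th - ts) (gb th) = - fd th.
Proof.
by rewrite gbarE -[ts - th]opprB mulmxN dotvNr /f_d /dotv mulmxA.
Qed.

Lemma w_d_avg th : wd th = avg (fun k : 'I_N => sqnorm (G k th - G k ts)).
Proof. by rewrite /avg card_ord. Qed.

Variable alpha : R.
Local Notation step := (inner_step phi r gamma N traj alpha).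

Lemma avg_inner_step_le tt th :
  avg (fun k : 'I_N => sqnorm (step tt th k - ts)) <=
  sqnorm (th - ts) - 2 * alpha * fd th + 2 * alpha ^+ 2 * (wd th + wd tt).
Proof.
pose a (k : 'I_N) := G k th - G k ts; pose b (k : 'I_N) := G k tt - G k ts.
pose v (k : 'I_N) := a k - (b k - gb tt).
have step_v (k : 'I_N) : step tt th k - ts = (th - ts) + alpha *: v k.
  rewrite /inner_step /v /a /b addrAC; congr (_ + _ *: _).
  by rewrite !opprD !opprK !addrA [_ - _ - G k tt]addrAC subrK.
have mean_a : mean a = gb th.
  by rewrite meanB -!gbar_mean gbar_theta_star subr0.
have mean_b : mean b = gb tt.
  by rewrite meanB -!gbar_mean gbar_theta_star subr0.
have mean_v : mean v = gb th.
  rewrite (meanB a (fun k => b k - gb tt)) (meanB b (fun=> gb tt)).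
  by rewrite mean_cst ?card_ord // mean_a mean_b subrr subr0.
have avg_v : avg (fun k => sqnorm (v k)) <= 2 * wd th + 2 * wd tt.
  apply: le_trans (_ : avg (fun k => 2 * sqnorm (a k) + 2 * sqnorm (b k - gb tt)) <= _).
    by apply: ler_avg => k; apply: sqnormB_le.
  rewrite avgD !avgZ !w_d_avg lerD2l ler_wpM2l // -mean_b.
  exact: avg_sqnorm_sub_mean.
under eq_avg => k do rewrite step_v sqnormD sqnormZ dotvZr.
rewrite !avgD !avgZ avg_cst ?card_ord // avg_dotvr mean_v dotv_gbar.
have := ler_wpM2l (sqr_ge0 alpha) avg_v; lra.
Qed.

End TDStep.

Section Epoch.
Variables (R : realFieldType) (S : finType) (d : nat)
  (phi : S -> 'cV[R]_d) (r : S -> S -> R) (gamma : R) (N : nat) (traj : nat -> S)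
  (alpha : R) (M : nat).
Hypothesis N_gt0 : (0 < N)%N.
Hypothesis A_unit : A_d phi gamma N traj \in unitmx.

Local Notation Omega := ({ffun 'I_M -> 'I_N} * 'I_M)%type.
Local Notation ts := (theta_star phi r gamma N traj).
Local Notation fd := (f_d phi r gamma N traj).
Local Notation wd := (w_d phi r gamma N traj).
Local Notation epoch := (@epoch R S d phi r gamma N traj alpha M).

Definition inner_iterate (tt : 'cV[R]_d) (s : seq 'I_N) : 'cV[R]_d :=
  foldl (inner_step phi r gamma N traj alpha tt) tt (map val s).

Definition expected_sqdist tt t :=
  avg (fun s : t.-tuple 'I_N => sqnorm (inner_iterate tt s - ts)).

Definition expected_descent tt t :=
  avg (fun s : t.-tuple 'I_N =>
    2 * alpha * fd (inner_iterate tt s) - 2 * alpha ^+ 2 * wd (inner_iterate tt s)).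

Lemma expected_sqdistS tt t :
  expected_sqdist tt t.+1 + expected_descent tt t <=
  expected_sqdist tt t + 2 * alpha ^+ 2 * wd tt.
Proof.
rewrite /expected_sqdist (avg_tuple_rcons _ (fun s => sqnorm (inner_iterate tt s - ts))).
rewrite /expected_descent -avgD.
rewrite -[X in _ <= _ + X](avg_cst (T := t.-tuple 'I_N)); last first.
  by rewrite card_tuple card_ord expn_gt0 N_gt0.
rewrite -avgD; apply: ler_avg => p.
under eq_avg => i do rewrite /inner_iterate map_rcons foldl_rcons.
have := avg_inner_step_le r N_gt0 A_unit alpha tt (inner_iterate tt p); lra.
Qed.

Lemma sum_expected_descent_le tt n :
  \sum_(t < n) expected_descent tt t <=
  sqnorm (tt - ts) + n%:R * (2 * alpha ^+ 2 * wd tt).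
Proof.
pose D t := expected_sqdist tt t.
apply: le_trans (_ : \sum_(t < n) (D t - D t.+1 + 2 * alpha ^+ 2 * wd tt) <= _).
  by apply: ler_sum => t _; have := expected_sqdistS tt t; rewrite /D; lra.
have D0 : D 0 = sqnorm (tt - ts).
  rewrite /D /expected_sqdist (eq_avg (G := fun=> sqnorm (tt - ts))) => [|s].
    by rewrite avg_cst // card_tuple.
  by rewrite tuple0.
have Dn_ge0 : 0 <= D n by apply: avg_ge0 => s; apply: sqnorm_ge0.
rewrite big_split sumr_const card_ord /= -mulr_natl -D0.
rewrite -(big_mkord xpredT (fun t => D t - D t.+1)).
rewrite (telescope_sumr_eq (fun t => - D t)) //; last by move=> t _; rewrite opprK addrC.
lra.
Qed.

Lemma epochE tt f (t : 'I_M) : epoch tt (f, t) = inner_iterate tt (take t (fgraph f)).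
Proof.
by rewrite /epoch /inner_iterate /= map_take -codom_ffun codomE -map_comp.
Qed.

Lemma epoch_avg tt (X : 'cV[R]_d -> R) :
  avg (fun o : Omega => X (epoch tt o)) =
  avg (fun t : 'I_M => avg (fun s : t.-tuple 'I_N => X (inner_iterate tt s))).
Proof.
have fgraph_bij : bijective (@fgraph 'I_M 'I_N).
  by exists Finfun; [apply: fgraphK | apply: FinfunK].
rewrite avg_pair exchange_avg; apply: eq_avg => t.
have le_tM : (t <= #|'I_M|)%N by rewrite card_ord ltnW.
have I_N_gt0 : (0 < #|'I_N|)%N by rewrite card_ord.
rewrite -(avg_tuple_take (fun s => X (inner_iterate tt s)) I_N_gt0 le_tM).
by rewrite -(avg_bij _ fgraph_bij); apply: eq_avg => f; rewrite epochE.
Qed.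

Lemma avg_epoch_le tt : (0 < M)%N ->
  avg (fun o : Omega =>
    2 * alpha * M%:R * fd (epoch tt o) - 2 * M%:R * alpha ^+ 2 * wd (epoch tt o))
  <= sqnorm (tt - ts) + 2 * alpha ^+ 2 * M%:R * wd tt.
Proof.
move=> M_gt0.
rewrite (epoch_avg tt
  (fun th => 2 * alpha * M%:R * fd th - 2 * M%:R * alpha ^+ 2 * wd th)).
rewrite (eq_avg (G := fun t : 'I_M => M%:R * expected_descent tt t)) => [|t]; last first.
  by rewrite /expected_descent -avgZ; apply: eq_avg => s; ring.
rewrite avgZ /avg card_ord mulrA mulfV ?pnatr_eq0 -?lt0n // mul1r.
have := sum_expected_descent_le tt M; lra.
Qed.

Variable theta0 : 'cV[R]_d.
Local Notation theta_tilde := (theta_tilde phi r gamma traj alpha theta0).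

Lemma theta_tilde_rcons k (p : seq Omega) o :
  size p = k -> theta_tilde k (rcons p o) = theta_tilde k p.
Proof. by move=> <-; rewrite /theta_tilde -cats1 takel_cat. Qed.

Lemma theta_tildeS k (p : seq Omega) o :
  size p = k -> theta_tilde k.+1 (rcons p o) = epoch (theta_tilde k p) o.
Proof.
move=> <-; rewrite /theta_tilde !take_oversize ?foldl_rcons //.
by rewrite size_rcons.
Qed.

Lemma avg_epoch_step_le k : (0 < M)%N ->
  avg (fun om : k.+1.-tuple Omega =>
    2 * alpha * M%:R * fd (theta_tilde k.+1 om)
    - 2 * M%:R * alpha ^+ 2 * wd (theta_tilde k.+1 om))
  <= avg (fun om : k.+1.-tuple Omega =>
    sqnorm (theta_tilde k om - ts) + 2 * alpha ^+ 2 * M%:R * wd (theta_tilde k om)).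
Proof.
move=> M_gt0.
have Omega_gt0 : (0 < #|{: Omega}|)%N.
  by rewrite card_prod card_ffun !card_ord muln_gt0 expn_gt0 N_gt0 M_gt0.
rewrite (avg_tuple_rcons _ (fun om => 2 * alpha * M%:R * fd (theta_tilde k.+1 om)
    - 2 * M%:R * alpha ^+ 2 * wd (theta_tilde k.+1 om))).
rewrite (avg_tuple_rcons _ (fun om =>
    sqnorm (theta_tilde k om - ts) + 2 * alpha ^+ 2 * M%:R * wd (theta_tilde k om))).
apply: ler_avg => p.
under eq_avg => o do rewrite theta_tildeS ?size_tuple //.
under [in X in _ <= X]eq_avg => o do rewrite theta_tilde_rcons ?size_tuple //.
by rewrite avg_cst //; apply: avg_epoch_le.
Qed.

End Epoch.

Theorem lemma1 (R : realFieldType) (S : finType) (d : nat)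
  (phi : S -> 'cV[R]_d) (r : S -> S -> R) (gamma : R)
  (N : nat) (traj : nat -> S) (alpha : R) (M : nat) (theta0 : 'cV[R]_d) :
  (forall s, sqnorm (phi s) <= 1) ->
  0 <= gamma < 1 ->
  (0 < N)%N ->
  A_d phi gamma N traj \in unitmx ->
  0 < alpha ->
  (1 <= M)%N ->
  forall m : nat, (1 <= m)%N ->
  let E := @Exp R N M m in
  let tt := @theta_tilde R S d phi r gamma N traj alpha M theta0 in
  let ts := theta_star phi r gamma N traj in
  let w := w_d phi r gamma N traj in
  2 * alpha * M%:R * E (fun om => f_d phi r gamma N traj (tt m om))
    - 2 * M%:R * alpha ^+ 2 * E (fun om => w (tt m om))
  <= E (fun om => sqnorm (tt m.-1 om - ts))
     + 2 * alpha ^+ 2 * M%:R * E (fun om => w (tt m.-1 om)).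
Proof.
move=> _ _ N_gt0 A_unit _ M_gt0 [//|k] _ /=.
have := avg_epoch_step_le r alpha N_gt0 A_unit theta0 k M_gt0.
by rewrite avgB avgD (avgZ (2 * alpha * M%:R)) (avgZ (2 * M%:R * alpha ^+ 2))
  (avgZ (2 * alpha ^+ 2 * M%:R)).
Qed.
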